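(* Let $R$ be a commutative noetherian ring. The class $\mathcal{Z}$ of $R$-modules is a Serre subcategory of the category of $R$-modules: it is closed under submodules, quotient modules and extensions (i.e. if $0\to M'\to M\to M''\to 0$ is exact with $M',M''\in\mathcal{Z}$ then $M\in\mathcal{Z}$).
   Context: An $R$-module $M$ belongs to the class $\mathcal{Z}$ if for every descending chain $N_1\supseteq N_2\supseteq N_3\supseteq\cdots$ of submodules of $M$ there is $n$ such that $\operatorname{Supp}_R(N_i/N_{i+1})\subseteq\operatorname{Max}R$ for all $i\ge n$. ($\operatorname{Max}R$ is the set of maximal ideals of $R$.) *)

From HB Require Import structures.
From mathcomp Require Import all_boot all_order all_algebra.
Set Implicit Arguments. Unset Strict Implicit. Unset Printing Implicit Defensive.
Import GRing.Theory.
Local Open Scope ring_scope.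

Definition is_ideal (R : comPzRingType) (I : R -> Prop) : Prop :=
  I 0 /\ (forall x y, I x -> I y -> I (x + y)) /\ (forall r x, I x -> I (r * x)).

Definition is_prime_ideal (R : comPzRingType) (P : R -> Prop) : Prop :=
  is_ideal P /\ ~ P 1 /\ (forall a b, P (a * b) -> P a \/ P b).

Definition is_maximal_ideal (R : comPzRingType) (P : R -> Prop) : Prop :=
  is_ideal P /\ ~ P 1 /\
  (forall J : R -> Prop, is_ideal J -> (forall x, P x -> J x) ->
     J 1 \/ (forall x, J x -> P x)).

Definition noetherian_ring (R : comPzRingType) : Prop :=
  forall I : nat -> R -> Prop,
    (forall n, is_ideal (I n)) ->
    (forall n x, I n x -> I n.+1 x) ->
    exists n, forall m x, (n <= m)%N -> I m x -> I n x.

Definition is_submodule (R : comPzRingType) (M : lmodType R) (N : M -> Prop) : Prop :=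
  N 0 /\ (forall x y, N x -> N y -> N (x + y)) /\ (forall (r : R) x, N x -> N (r *: x)).

(* p \in Supp_R(N / N') for submodules N' <= N of M.
   By definition p \in Supp(Q) iff Q_p <> 0 iff some element q of Q
   satisfies ann(q) \subseteq p.  For q = x + N' (x \in N),
   ann(q) = {r | r x \in N'}. *)
Definition in_supp_quot (R : comPzRingType) (M : lmodType R)
    (N N' : M -> Prop) (p : R -> Prop) : Prop :=
  is_prime_ideal p /\ exists x, N x /\ (forall r : R, N' (r *: x) -> p r).

Definition in_class_Z (R : comPzRingType) (M : lmodType R) : Prop :=
  forall N : nat -> M -> Prop,
    (forall i, is_submodule (N i)) ->
    (forall i x, N i.+1 x -> N i x) ->
    exists n, forall i, (n <= i)%N ->
      forall p : R -> Prop, in_supp_quot (N i) (N i.+1) p -> is_maximal_ideal p.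

From HB Require Import structures.
From mathcomp Require Import all_boot all_order all_algebra.
From Stdlib Require Import Classical.
Set Implicit Arguments.
Unset Strict Implicit.
Unset Printing Implicit Defensive.
Import GRing.Theory.
Local Open Scope ring_scope.

(* A prime p in the support of a subquotient N/N' is witnessed by one element
   x of N whose annihilator modulo N' lies in p.  Images under injective maps
   and preimages under surjective maps carry such witnesses over unchanged.
   For an extension 0 -> M' -f-> M -g-> M'' -> 0, either the witness x already
   works for g x, or some s outside p moves s *: x into N' modulo ker g = im f;
   then the preimage of s *: x - m under f is a witness in M', because p is
   prime.  Hence a tail of supports in Max R survives all three operations. *)

Section SupportTransfer.
Variable R : comPzRingType.
Implicit Types (p : R -> Prop).

Definition submod_image (M' M : lmodType R) (f : M' -> M) (N : M' -> Prop) :=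
  fun y => exists2 x, N x & f x = y.

Definition submod_preim (M' M : lmodType R) (f : M' -> M) (N : M -> Prop) :=
  fun x => N (f x).

Lemma submodule_scale (M : lmodType R) (N : M -> Prop) r x :
  is_submodule N -> N x -> N (r *: x).
Proof. by case=> _ [_ NZ]; apply: NZ. Qed.

Lemma submoduleD (M : lmodType R) (N : M -> Prop) x y :
  is_submodule N -> N x -> N y -> N (x + y).
Proof. by case=> _ [ND _]; apply: ND. Qed.

Lemma submoduleB (M : lmodType R) (N : M -> Prop) x y :
  is_submodule N -> N x -> N y -> N (x - y).
Proof.
move=> sN Nx Ny; apply: submoduleD => //.
by rewrite -scaleN1r; apply: submodule_scale.
Qed.

Lemma submodule_preim (M' M : lmodType R) (f : {linear M' -> M}) N :
  is_submodule N -> is_submodule (submod_preim f N).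
Proof.
move=> sN; split; first by rewrite /submod_preim linear0; case: sN.
split=> [x y Nx Ny | r x Nx]; rewrite /submod_preim.
  by rewrite linearD; apply: submoduleD.
by rewrite linearZ; apply: submodule_scale.
Qed.

Lemma submodule_image (M' M : lmodType R) (f : {linear M' -> M}) N :
  is_submodule N -> is_submodule (submod_image f N).
Proof.
move=> sN; split; first by exists 0; [case: sN | rewrite linear0].
split=> [_ _ [a Na <-] [b Nb <-] | r _ [a Na <-]].
  by exists (a + b); [apply: submoduleD | rewrite linearD].
by exists (r *: a); [apply: submodule_scale | rewrite linearZ].
Qed.

Lemma submod_image_sub (M' M : lmodType R) (f : M' -> M) (N N' : M' -> Prop) :
  (forall x, N x -> N' x) -> forall y, submod_image f N y -> submod_image f N' y.
Proof. by move=> NN' _ [x Nx <-]; exists x; first exact: NN'. Qed.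

Lemma in_supp_quot_image (M' M : lmodType R) (f : {linear M' -> M}) N N' p :
  injective f -> in_supp_quot N N' p ->
  in_supp_quot (submod_image f N) (submod_image f N') p.
Proof.
move=> f_inj [pp [x [Nx annx]]]; split=> //; exists (f x); split.
  by exists x.
move=> r [z N'z]; rewrite -linearZ => /f_inj ez.
by apply: annx; rewrite -ez.
Qed.

Lemma in_supp_quot_preim (M M'' : lmodType R) (g : {linear M -> M''}) N N' p :
  (forall y, exists x, g x = y) -> in_supp_quot N N' p ->
  in_supp_quot (submod_preim g N) (submod_preim g N') p.
Proof.
move=> g_surj [pp [y [Ny anny]]]; split=> //.
have [x gx] := g_surj y; exists x; rewrite /submod_preim gx; split=> // r.
by rewrite linearZ gx; apply: anny.
Qed.

Lemma in_supp_quot_ext (M' M M'' : lmodType R)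
    (f : {linear M' -> M}) (g : {linear M -> M''}) N N' p :
  (forall x, g x = 0 <-> exists x', f x' = x) ->
  is_submodule N -> is_submodule N' -> (forall x, N' x -> N x) ->
  in_supp_quot N N' p ->
  in_supp_quot (submod_preim f N) (submod_preim f N') p \/
  in_supp_quot (submod_image g N) (submod_image g N') p.
Proof.
move=> exact_g sN sN' N'N [pp [x [Nx annx]]].
have [anngx | /not_all_ex_not[s not_anngx]] :=
  classic (forall r, submod_image g N' (r *: g x) -> p r).
  by right; split=> //; exists (g x); split=> //; exists x.
have [[m N'm gm] nps] := imply_to_and _ _ not_anngx.
have [z fz] : exists z, f z = s *: x - m.
  by apply/exact_g; rewrite linearB linearZ gm subrr.
left; split=> //; exists z; split.
  by rewrite /submod_preim fz; apply: submoduleB (submodule_scale _ sN Nx) (N'N _ N'm).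
move=> r N'rz; have N'rsx : N' ((r * s) *: x).
  have -> : (r * s) *: x = f (r *: z) + r *: m.
    by rewrite linearZ /= fz scalerBr scalerA subrK.
  by apply: submoduleD => //; apply: submodule_scale.
case: pp => _ [_ p_prime].
by case: (p_prime _ _ (annx _ N'rsx)) => // /nps.
Qed.

Lemma in_class_Z_sub (M' M : lmodType R) (f : {linear M' -> M}) :
  injective f -> in_class_Z M -> in_class_Z M'.
Proof.
move=> f_inj ZM N sN decN.
have [n Hn] := ZM (fun i => submod_image f (N i))
  (fun i => submodule_image f (sN i))
  (fun i => submod_image_sub (decN i)).
exists n => i ni p supp; apply: (Hn i ni).
exact: in_supp_quot_image.
Qed.

Lemma in_class_Z_quot (M M'' : lmodType R) (g : {linear M -> M''}) :
  (forall y, exists x, g x = y) -> in_class_Z M -> in_class_Z M''.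
Proof.
move=> g_surj ZM N sN decN.
have [n Hn] := ZM (fun i => submod_preim g (N i))
  (fun i => submodule_preim g (sN i)) (fun i x => decN i (g x)).
exists n => i ni p supp; apply: (Hn i ni).
exact: in_supp_quot_preim.
Qed.

Lemma in_class_Z_ext (M' M M'' : lmodType R)
    (f : {linear M' -> M}) (g : {linear M -> M''}) :
  (forall x, g x = 0 <-> exists x', f x' = x) ->
  in_class_Z M' -> in_class_Z M'' -> in_class_Z M.
Proof.
move=> exact_g ZM' ZM'' N sN decN.
have [n1 H1] := ZM' (fun i => submod_preim f (N i))
  (fun i => submodule_preim f (sN i)) (fun i x => decN i (f x)).
have [n2 H2] := ZM'' (fun i => submod_image g (N i))
  (fun i => submodule_image g (sN i))
  (fun i => submod_image_sub (decN i)).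
exists (maxn n1 n2) => i; rewrite geq_max => /andP[n1i n2i] p supp.
have [] := in_supp_quot_ext exact_g (sN i) (sN i.+1) (decN i) supp.
  exact: H1.
exact: H2.
Qed.

End SupportTransfer.

Theorem proposition2p6 (R : comPzRingType) (hR : noetherian_ring R) :
  (forall (M' M : lmodType R) (f : {linear M' -> M}),
      injective f -> in_class_Z M -> in_class_Z M') /\
  (forall (M M'' : lmodType R) (g : {linear M -> M''}),
      (forall y, exists x, g x = y) -> in_class_Z M -> in_class_Z M'') /\
  (forall (M' M M'' : lmodType R) (f : {linear M' -> M}) (g : {linear M -> M''}),
      injective f -> (forall y, exists x, g x = y) ->
      (forall x, g x = 0 <-> exists x', f x' = x) ->
      in_class_Z M' -> in_class_Z M'' -> in_class_Z M).
Proof.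
split; first exact: in_class_Z_sub.
split; first exact: in_class_Z_quot.
by move=> M' M M'' f g _ _; apply: in_class_Z_ext.
Qed.
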